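(* Equip $V^{5,2}=\mathrm{SO}(5)/\mathrm{SO}(3)$ with the Sasakian structure $\eta=X^1$, $g=y_1Q|_{\mathfrak m_1}+y_2Q|_{\mathfrak m_2}+y_3Q|_{\mathfrak m_3}$ with $y_1=4y_2^2$, $y_2=y_3>0$. Then the $\mathrm{SO}(5)$-invariant connection on the homogeneous bundle $P_1=\mathrm{SO}(5)\times_{\mathrm{id}}\mathrm{SO}(3)$ corresponding to $\alpha=e^8\otimes e_8+e^9\otimes e_9+e^{10}\otimes e_{10}$ is a self-dual contact instanton, i.e. its curvature satisfies $\ast(F_\alpha\wedge\eta\wedge\omega)=F_\alpha$ with $\omega=\frac12d\eta$.
   Context: Basis of $\mathfrak{so}(5)$ (with $E_{ij}$ the elementary $5\times5$ matrices): $e_1=E_{12}-E_{21}$, $e_2=E_{13}-E_{31}$, $e_3=E_{14}-E_{41}$, $e_4=E_{15}-E_{51}$, $e_5=E_{23}-E_{32}$, $e_6=E_{24}-E_{42}$, $e_7=E_{25}-E_{52}$, $e_8=E_{34}-E_{43}$, $e_9=E_{35}-E_{53}$, $e_{10}=E_{54}-E_{45}$; bracket = commutator; $e^i$ dual basis. $\mathrm{SO}(3)$ has Lie algebra $\mathrm{span}\{e_8,e_9,e_{10}\}$; $\mathfrak m=\mathrm{span}\{e_1,\dots,e_7\}$ identified with the tangent space of $V^{5,2}$ at the origin. $Q(A,B)=\frac12\mathrm{tr}(AB^T)$, $\mathfrak m_1=\mathrm{span}\{e_1\}$, $\mathfrak m_2=\mathrm{span}\{e_2,e_3,e_4\}$,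 $\mathfrak m_3=\mathrm{span}\{e_5,e_6,e_7\}$. Orthonormal basis $X_1=e_1/\sqrt{y_1}$, $X_i=e_i/\sqrt{y_2}$ ($i=2,\dots,7$), dual $X^i$; $\omega=X^{25}+X^{36}+X^{47}$. Invariant connections on $G\times_\phi K\to G/H$ correspond to linear maps $\alpha:\mathfrak g\to\mathfrak k$ with $\alpha|_{\mathfrak h}=\phi_*$ and $\mathrm{Ad}(H)$-equivariance; the curvature on $\mathfrak m$ is $F(X,Y)=[\alpha X,\alpha Y]-\alpha([X,Y])$. $\ast$ is the Hodge star of $g$ with the orientation for which the self-dual contact 2-forms $X^{23}+X^{56}$, $X^{24}+X^{57}$, $X^{34}+X^{67}$, etc. satisfy $\ast(\eta\wedge\omega\wedge w)=w$. *)

From HB Require Import structures.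
From mathcomp Require Import all_boot all_order all_algebra.
From mathcomp Require Import reals.
Set Implicit Arguments. Unset Strict Implicit. Unset Printing Implicit Defensive.
Import Order.TTheory GRing.Theory Num.Theory.
Local Open Scope ring_scope.

Section V52.
Variable R : realType.

(* index pairs (1-based) of the basis e_k = E_{ab} - E_{ba} of so(5) *)
Definition epair (k : nat) : nat * nat :=
  match k with
  | 1 => (1,2)%N | 2 => (1,3)%N | 3 => (1,4)%N | 4 => (1,5)%N
  | 5 => (2,3)%N | 6 => (2,4)%N | 7 => (2,5)%N | 8 => (3,4)%N
  | 9 => (3,5)%N | 10 => (5,4)%N | _ => (0,0)%N
  end.

Definition Emx (a b : nat) : 'M[R]_5 := delta_mx (inord a.-1) (inord b.-1).

Definition ebasis (k : nat) : 'M[R]_5 :=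
  let: (a, b) := epair k in Emx a b - Emx b a.

(* the dual basis e^k, evaluated on a skew-symmetric matrix *)
Definition ecoef (k : nat) (A : 'M[R]_5) : R :=
  let: (a, b) := epair k in A (inord a.-1) (inord b.-1).

Definition lie (A B : 'M[R]_5) : 'M[R]_5 := A *m B - B *m A.

Variables y1 y2 y3 : R.

(* metric coefficient of the block containing X_{i+1} (0-based index i) *)
Definition yof (i : 'I_7) : R :=
  if (i == 0 :> nat) then y1 else if (i < 4)%N then y2 else y3.

(* orthonormal basis X_1..X_7 (0-based: X i = X_{i+1}) *)
Definition X (i : 'I_7) : 'M[R]_5 := (Num.sqrt (yof i))^-1 *: ebasis i.+1.

(* eta = X^1 as a functional on g (zero on h) *)
Definition etaf (A : 'M[R]_5) : R := Num.sqrt y1 * ecoef 1 A.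

Definition alpha (A : 'M[R]_5) : 'M[R]_5 :=
  ecoef 8 A *: ebasis 8 + ecoef 9 A *: ebasis 9 + ecoef 10 A *: ebasis 10.

Definition curv (A B : 'M[R]_5) : 'M[R]_5 :=
  lie (alpha A) (alpha B) - alpha (lie A B).

(* ---- exterior algebra on m^* in the orthonormal coframe X^1..X^7 ----
   A (V-valued) form is given by its coefficients on X^I, I increasing. *)
Definition form (V : Type) := {set 'I_7} -> V.

(* shuffle sign of X^I /\ X^J *)
Definition shsign (I J : {set 'I_7}) : R :=
  (-1) ^+ #|[set p : 'I_7 * 'I_7 | [&& p.1 \in I, p.2 \in J & (p.2 < p.1)%N]]|.

Definition wedge (V : lmodType R) (a : form V) (b : form R) : form V :=
  fun K => \sum_(I : {set 'I_7} | I \subset K)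
             (shsign I (K :\: I) * b (K :\: I)) *: a I.

(* Hodge star of the orthonormal coframe with volume form eps X^{1...7} *)
Definition hodge (V : lmodType R) (eps : R) (a : form V) : form V :=
  fun J => (eps * shsign (~: J) J) *: a (~: J).

Definition form1 (V : lmodType R) (f : 'I_7 -> V) : form V :=
  fun I => if #|I| == 1%N then \sum_(i in I) f i else 0.
Definition form2 (V : lmodType R) (f : 'I_7 -> 'I_7 -> V) : form V :=
  fun I => if #|I| == 2%N then \sum_(i in I) \sum_(j in I | (i < j)%N) f i j
           else 0.

Definition eta_form : form R := form1 (V := R^o) (fun i => etaf (X i)).

(* omega = 1/2 d eta, with d eta (X,Y) = - eta([X,Y]) for invariant forms *)
Definition omega : form R :=
  form2 (V := R^o) (fun i j => - (1 / 2) * etaf (lie (X i) (X j))).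

Definition Fal : form 'M[R]_5 := form2 (fun i j => curv (X i) (X j)).

End V52.

(* the self-dual contact 2-form X^{23} + X^{56} fixing the orientation *)
Definition w0 (R : realType) : form R := fun I =>
  ((I == [set (inord 1 : 'I_7); inord 2]) || (I == [set (inord 4 : 'I_7); inord 5]))%:R.

From Pilot Require Import Defs.
From mathcomp Require Import all_boot all_order all_algebra.
From mathcomp Require Import reals boolp ring zify.
Set Implicit Arguments. Unset Strict Implicit. Unset Printing Implicit Defensive.
Import Order.TTheory GRing.Theory Num.Theory.

(* Since alpha vanishes on m, F(X_i, X_j) = - alpha [X_i, X_j], and for
   y1 = 4 y2^2, y3 = y2 this is - y2^-1 (c^8_ij e_8 + c^9_ij e_9 + c^10_ij e_10),
   with c^k_ij the (integer) structure constants of so(5) in the basis e; the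
   factor y1 never enters because [e_1, m] has no component along e_1 or h.
   Likewise eta = X^1 and omega = - sum c^1_ij X^ij have integer coefficients
   (here sqrt y1 = 2 y2 is used).  As wedge and Hodge star act on the real
   coefficient forms only, it suffices that each of the three real 2-forms
   sum c^k_ij X^ij is fixed by * (. /\ eta /\ omega).  These are identities
   between integer vectors on the 2^7 monomials X^I, which are checked by
   evaluation after encoding I as a 7-bit number.  The same evaluation on X^23
   shows that the orientation hypothesis forces eps = 1. *)

Section FormLinearity.
Local Open Scope ring_scope.
Variables (R : realType) (V : lmodType R).

Definition form_scale (r : Defs.form R) (v : V) : Defs.form V := fun I => r I *: v.

Lemma wedgeD (a1 a2 : Defs.form V) (b : Defs.form R) :
  wedge (a1 \+ a2) b = wedge a1 b \+ wedge a2 b.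
Proof.
by apply: funext => K; rewrite /wedge /= -big_split; apply: eq_bigr => I _; rewrite scalerDr.
Qed.

Lemma wedge_scale (r b : Defs.form R) (v : V) :
  wedge (form_scale r v) b = form_scale (wedge (V := R^o) r b) v.
Proof.
apply: funext => K; rewrite /wedge /form_scale scaler_suml.
by apply: eq_bigr => I _; rewrite scalerA.
Qed.

Lemma hodgeD (eps : R) (a1 a2 : Defs.form V) :
  hodge eps (a1 \+ a2) = hodge eps a1 \+ hodge eps a2.
Proof. by apply: funext => J; rewrite /hodge /= scalerDr. Qed.

Lemma hodge_scale (eps : R) (r : Defs.form R) (v : V) :
  hodge eps (form_scale r v) = form_scale (hodge (V := R^o) eps r) v.
Proof. by apply: funext => J; rewrite /hodge /form_scale scalerA. Qed.

End FormLinearity.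

Definition bit (i m : nat) : bool := odd (m %/ 2 ^ i).

Definition nat_of_bits (n : nat) (f : nat -> bool) : nat :=
  sumn [seq f j * 2 ^ j | j <- iota 0 n].

Lemma nat_of_bitsS n f : nat_of_bits n.+1 f = nat_of_bits n f + f n * 2 ^ n.
Proof. by rewrite /nat_of_bits -[n.+1]addn1 iotaD map_cat sumn_cat /= addn0. Qed.

Lemma nat_of_bits_lt n f : nat_of_bits n f < 2 ^ n.
Proof. by elim: n => [|n IH] //; rewrite nat_of_bitsS expnS; case: (f n); lia. Qed.

Lemma bit_nat_of_bits n f i : i < n -> bit i (nat_of_bits n f) = f i.
Proof.
elim: n => // n IH; rewrite ltnS leq_eqVlt => /orP[/eqP-> | lt_in];
  rewrite nat_of_bitsS /bit.
  by rewrite addnC divnMDl ?expn_gt0 // divn_small ?nat_of_bits_lt // addn0 oddb.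
have -> : f n * 2 ^ n = f n * 2 ^ (n - i) * 2 ^ i by rewrite -mulnA -expnD subnK // ltnW.
rewrite divnDr ?dvdn_mull // mulnK ?expn_gt0 // oddD oddM oddX subn_eq0.
by rewrite leqNgt lt_in /= andbF addbF; apply: IH.
Qed.

Definition mask_set (m : nat) : {set 'I_7} := [set i : 'I_7 | bit i m].

Definition mask_of_set (K : {set 'I_7}) : 'I_128 :=
  Ordinal (nat_of_bits_lt 7 (fun i => inord i \in K)).

Lemma mask_of_setK : cancel mask_of_set (fun m : 'I_128 => mask_set m).
Proof. by move=> K; apply/setP => i; rewrite inE bit_nat_of_bits // inord_val. Qed.

Lemma mask_set_bij : bijective (fun m : 'I_128 => mask_set m).
Proof.
apply: bij_can_bij mask_of_setK; apply: inj_card_bij (can_inj mask_of_setK) _.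
by rewrite card_ord -cardsT -powersetT card_powerset cardsT card_ord.
Qed.

Lemma mask_set_onto (K : {set 'I_7}) : exists2 m, m < 128 & K = mask_set m.
Proof. by exists (mask_of_set K) => //; rewrite mask_of_setK. Qed.

Lemma sum_over_masks (V : nmodType) (P : pred {set 'I_7}) (F : {set 'I_7} -> V) :
  (\sum_(I | P I) F I = \sum_(0 <= m < 128 | P (mask_set m)) F (mask_set m))%R.
Proof.
rewrite (reindex (fun m : 'I_128 => mask_set m)) /=; last exact: onW_bij mask_set_bij.
by rewrite -(big_mkord (fun m => P (mask_set m)) (fun m => F (mask_set m))).
Qed.

Definition mask_card (m : nat) : nat := count (bit^~ m) (iota 0 7).

Lemma card_mask_set m : #|mask_set m| = mask_card m.
Proof.
rewrite -sum1_card (eq_bigl (fun i : 'I_7 => bit i m)) => [|i]; last by rewrite inE.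
by rewrite -(big_mkord (bit^~ m) (fun=> 1)) /index_iota subn0 sum1_count.
Qed.

Definition mask_sub (m k : nat) : bool := all (fun i => bit i m ==> bit i k) (iota 0 7).

Lemma subset_mask_set m k : (mask_set m \subset mask_set k) = mask_sub m k.
Proof.
apply/subsetP/allP => [sub i | sub i]; last first.
  rewrite !inE => mi; have := sub i; rewrite mem_iota add0n ltn_ord.
  by move=> /(_ isT) /implyP; apply.
rewrite mem_iota add0n => /andP[_ lt_i7]; apply/implyP => mi.
by have := sub (Ordinal lt_i7); rewrite !inE; apply.
Qed.

Definition mask_eq (m n : nat) : bool := all (fun i => bit i m == bit i n) (iota 0 7).

Lemma eq_mask_set m n : (mask_set m == mask_set n) = mask_eq m n.
Proof.
apply/eqP/allP => [eq_mn i | eq_mn]; last first.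
  by apply/setP => i; rewrite !inE; apply/eqP/eq_mn; rewrite mem_iota add0n ltn_ord.
rewrite mem_iota add0n => /andP[_ lt_i7].
by have := congr1 (fun A : {set 'I_7} => Ordinal lt_i7 \in A) eq_mn; rewrite !inE => ->.
Qed.

Definition mask_diff (k m : nat) : nat := nat_of_bits 7 (fun i => bit i k && ~~ bit i m).

Lemma mask_setD k m : mask_set k :\: mask_set m = mask_set (mask_diff k m).
Proof. by apply/setP => i; rewrite !inE bit_nat_of_bits // andbC. Qed.

Definition mask_compl (k : nat) : nat := mask_diff 127 k.

Lemma mask_setC k : ~: mask_set k = mask_set (mask_compl k).
Proof.
rewrite -mask_setD (_ : mask_set 127 = setT) ?setTD //.
by apply/setP => -[i lt_i7]; rewrite !inE; move: lt_i7; do 7?case: i => [//|i].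
Qed.

Definition shuffle_count (a b : nat) : nat :=
  count (fun p => [&& bit p.1 a, bit p.2 b & p.2 < p.1])
    [seq (i, j) | i <- iota 0 7, j <- iota 0 7].

Lemma card_shuffle_mask a b :
  #|[set p : 'I_7 * 'I_7 | [&& p.1 \in mask_set a, p.2 \in mask_set b & p.2 < p.1]]|
  = shuffle_count a b.
Proof.
rewrite /shuffle_count -sum1_card -sum1_count big_mkcond [RHS]big_mkcond big_allpairs.
rewrite -[iota 0 7]/(index_iota 0 7) big_mkord.
under [RHS]eq_bigr do rewrite big_mkord.
by rewrite pair_bigA /=; apply: eq_bigr => -[i j] _; rewrite !inE.
Qed.

Local Open Scope ring_scope.

(* \sum is locked, hence opaque to vm_compute: the integer model sums with foldr. *)
Definition sumz (n : nat) (F : nat -> int) : int := foldr (fun i s => F i + s) 0 (iota 0 n).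

Lemma sumzE n F : sumz n F = \sum_(0 <= i < n) F i.
Proof. by rewrite unlock /index_iota subn0. Qed.

Lemma sum_ord7_intr (R : realType) (P : pred nat) (G : nat -> int) :
  \sum_(i : 'I_7 | P i) (G i)%:~R = (sumz 7 (fun i => if P i then G i else 0))%:~R :> R.
Proof. by rewrite sumzE -big_mkcond big_mkord rmorph_sum. Qed.

Definition tabulate (f : nat -> int) : nat -> int :=
  let t := map f (iota 0 128) in nth 0 t.

Lemma tabulateE f m : (m < 128)%N -> tabulate f m = f m.
Proof. by move=> lt_m; rewrite /tabulate (nth_map 0%N) ?size_iota // nth_iota. Qed.

Definition wedgeZ (aZ bZ : nat -> int) (k : nat) : int :=
  sumz 128 (fun m => if mask_sub m k then
    (-1) ^+ shuffle_count m (mask_diff k m) * bZ (mask_diff k m) * aZ m else 0).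

Definition hodgeZ (e : int) (aZ : nat -> int) (k : nat) : int :=
  e * (-1) ^+ shuffle_count (mask_compl k) k * aZ (mask_compl k).

Definition form1Z (c : nat -> int) (m : nat) : int :=
  if mask_card m == 1%N then sumz 7 (fun i => if bit i m then c i else 0) else 0.

Definition form2Z (c : nat -> nat -> int) (m : nat) : int :=
  if mask_card m == 2%N then
    sumz 7 (fun i => if bit i m then
      sumz 7 (fun j => if bit j m && (i < j)%N then c i j else 0) else 0)
  else 0.

Section IntegerModel.
Variable R : realType.

Definition models (aZ : nat -> int) (a : Defs.form R) : Prop :=
  forall m, (m < 128)%N -> a (mask_set m) = (aZ m)%:~R.

Lemma models_tabulate f a : models f a -> models (tabulate f) a.
Proof. by move=> fa m lt_m; rewrite tabulateE // fa. Qed.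

Lemma models_eq aZ bZ a b : models aZ a -> models bZ b ->
  all (fun m => aZ m == bZ m) (iota 0 128) -> a = b.
Proof.
move=> aa bb /allP eq_ab; apply: funext => K; have [m lt_m ->] := mask_set_onto K.
by rewrite aa // bb //; congr intmul; apply/eqP/eq_ab; rewrite mem_iota.
Qed.

Lemma shsign_mask a b : shsign R (mask_set a) (mask_set b) = ((-1) ^+ shuffle_count a b)%:~R.
Proof. by rewrite /shsign card_shuffle_mask rmorphXn rmorphN1. Qed.

Lemma models_wedge aZ bZ a b :
  models aZ a -> models bZ b -> models (wedgeZ aZ bZ) (wedge (V := R^o) a b).
Proof.
move=> aa bb k lt_k; rewrite /wedge sum_over_masks big_mkcond /wedgeZ sumzE rmorph_sum.
apply: eq_big_nat => m /andP[_ lt_m]; rewrite subset_mask_set.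
case: ifP => _; last by rewrite rmorph0.
rewrite mask_setD shsign_mask bb ?aa //; last exact: nat_of_bits_lt.
by rewrite !rmorphM.
Qed.

Lemma models_hodge e aZ a : models aZ a -> models (hodgeZ e aZ) (hodge (V := R^o) e%:~R a).
Proof.
move=> aa k lt_k; rewrite /hodge mask_setC shsign_mask aa; last exact: nat_of_bits_lt.
by rewrite !rmorphM.
Qed.

Lemma models_form1 c : models (form1Z c) (form1 (V := R^o) (fun i => (c i)%:~R)).
Proof.
move=> m _; rewrite /form1 /form1Z card_mask_set; case: ifP => _; last by rewrite rmorph0.
rewrite (eq_bigl (fun i : 'I_7 => bit i m)) => [|i]; last by rewrite inE.
exact: (sum_ord7_intr R (bit^~ m) c).
Qed.

Lemma models_form2 c :
  models (form2Z c) (form2 (V := R^o) (fun i j => (c i j)%:~R)).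
Proof.
move=> m _; rewrite /form2 /form2Z card_mask_set; case: ifP => _; last by rewrite rmorph0.
rewrite (eq_bigl (fun i : 'I_7 => bit i m)) => [|i]; last by rewrite inE.
rewrite -(sum_ord7_intr R (bit^~ m)); apply: eq_bigr => i _.
rewrite (eq_bigl (fun j : 'I_7 => bit j m && (i < j)%N)) => [|j]; last by rewrite inE.
exact: (sum_ord7_intr R (fun j => bit j m && (i < j)%N) (c i)).
Qed.

End IntegerModel.

Definition ebasisZ (n x y : nat) : int :=
  let: (p, q) := epair n in
  ((x == p.-1) && (y == q.-1))%:Z - ((x == q.-1) && (y == p.-1))%:Z.

Definition lieZ (m n x y : nat) : int :=
  sumz 5 (fun c => ebasisZ m x c * ebasisZ n c y) - sumz 5 (fun c => ebasisZ n x c * ebasisZ m c y).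

Definition ecoefZ (k : nat) (A : nat -> nat -> int) : int :=
  let: (p, q) := epair k in A p.-1 q.-1.

Definition structZ (k m n : nat) : int := ecoefZ k (lieZ m n).

Lemma ecoefZ_ebasisZ : all (fun k => all (fun n => ecoefZ k (ebasisZ n) == (k == n)%:Z)
  (iota 1 10)) (iota 1 10).
Proof. by vm_compute. Qed.

Lemma structZ_e1 : all (fun k => all (fun j => (structZ k 1 j == 0) && (structZ k j 1 == 0))
  (iota 1 7)) [:: 1; 8; 9; 10]%N.
Proof. by vm_compute. Qed.

Lemma epair_le5 k : ((epair k).1 <= 5)%N && ((epair k).2 <= 5)%N.
Proof. by do 11?case: k => [//|k]. Qed.

Section So5.
Variable R : realType.

Lemma ebasisE n (i j : 'I_5) : ebasis R n i j = (ebasisZ n i j)%:~R.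
Proof.
rewrite /ebasis /ebasisZ /Emx; have := epair_le5 n.
case: (epair n) => [p q] /= /andP[p_le5 q_le5].
have [p_lt q_lt] : (p.-1 < 5)%N /\ (q.-1 < 5)%N by lia.
by rewrite !mxE rmorphB /= -!val_eqE /= !inordK.
Qed.

Lemma ecoef_int k (A : 'M[R]_5) (f : nat -> nat -> int) :
  (forall i j : 'I_5, A i j = (f i j)%:~R) -> ecoef k A = (ecoefZ k f)%:~R.
Proof.
move=> Af; rewrite /ecoef /ecoefZ; have := epair_le5 k.
case: (epair k) => [p q] /= /andP[p_le5 q_le5].
have [p_lt q_lt] : (p.-1 < 5)%N /\ (q.-1 < 5)%N by lia.
by rewrite Af !inordK.
Qed.

Lemma ecoef_ebasis k n : k \in iota 1 10 -> n \in iota 1 10 ->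
  ecoef k (ebasis R n) = (k == n)%:R.
Proof.
move=> k_in n_in; rewrite (ecoef_int k (ebasisE n)).
by move/allP: ecoefZ_ebasisZ => /(_ k k_in) /allP /(_ n n_in) /eqP ->.
Qed.

Lemma lie_ebasisE m n (i j : 'I_5) :
  lie (ebasis R m) (ebasis R n) i j = (lieZ m n i j)%:~R.
Proof.
rewrite /lie !mxE /lieZ rmorphB /= !sumzE !big_mkord !rmorph_sum /=.
by congr (_ - _); apply: eq_bigr => c _; rewrite !ebasisE rmorphM.
Qed.

Lemma ecoef_lie_ebasis k m n :
  ecoef k (lie (ebasis R m) (ebasis R n)) = (structZ k m n)%:~R.
Proof. by rewrite (ecoef_int k (lie_ebasisE m n)). Qed.

Lemma ecoef_scale k c (A : 'M[R]_5) : ecoef k (c *: A) = c * ecoef k A.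
Proof. by rewrite /ecoef; case: (epair k) => ? ?; rewrite mxE. Qed.

Lemma lie_scale c d (A B : 'M[R]_5) : lie (c *: A) (d *: B) = (c * d) *: lie A B.
Proof. by rewrite /lie -!scalemxAl -!scalemxAr !scalerA scalerBr (mulrC d c). Qed.

End So5.

Lemma alpha_X (R : realType) (y1 y2 y3 : R) i : alpha (X y1 y2 y3 i) = 0.
Proof.
rewrite /alpha /X !ecoef_scale.
by case: i => -[|[|[|[|[|[|[|//]]]]]]] ?; rewrite !ecoef_ebasis // !mulr0 !scale0r !addr0.
Qed.

Definition etaZ : nat -> int := form1Z (fun i => (i == 0)%N%:Z).
Definition omegaZ : nat -> int := form2Z (fun i j => - structZ 1 i.+1 j.+1).
Definition curv_compZ (k : nat) : nat -> int := form2Z (fun i j => structZ k i.+1 j.+1).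
Definition w0Z (m : nat) : int := (mask_eq m 6 || mask_eq m 48)%:Z.

(* The [let] makes vm_compute build the table of [aZ /\ eta] once, not once per [m]. *)
Definition self_dualZ (aZ : nat -> int) : bool :=
  let a_eta := tabulate (wedgeZ aZ etaZ) in
  all (fun m => hodgeZ 1 (wedgeZ a_eta omegaZ) m == aZ m) (iota 0 128).

Lemma self_dual_curv_compZ : all (fun k => self_dualZ (curv_compZ k)) [:: 8; 9; 10]%N.
Proof. by vm_compute. Qed.

Lemma orientationZ : hodgeZ (-1) (wedgeZ (wedgeZ etaZ omegaZ) w0Z) 6 = -1.
Proof. by vm_compute. Qed.

Lemma models_w0 (R : realType) : models w0Z (w0 R).
Proof.
have pairE (a b c : nat) : (a < 7)%N -> (b < 7)%N ->
    all (fun i => bit i c == (i == a) || (i == b)) (iota 0 7) ->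
    [set (inord a : 'I_7); inord b] = mask_set c.
  move=> lt_a lt_b /allP bits_c; apply/setP => i; rewrite !inE -!val_eqE /= !inordK //.
  by apply/esym/eqP/bits_c; rewrite mem_iota add0n ltn_ord.
by move=> m _; rewrite /w0 (pairE 1 2 6)%N // (pairE 4 5 48)%N // !eq_mask_set.
Qed.

Section Geometry.
Variables (R : realType) (y1 y2 y3 : R).
Hypotheses (y2_gt0 : 0 < y2) (y3E : y3 = y2) (y1E : y1 = 4 * y2 ^+ 2).

Lemma sqrt_y1 : Num.sqrt y1 = 2 * y2.
Proof.
have -> : y1 = (2 * y2) ^+ 2 by rewrite y1E; ring.
by rewrite sqrtr_sqr ger0_norm // mulr_ge0 // ltW.
Qed.

Lemma etaf_X i : etaf y1 (X y1 y2 y3 i) = (i == 0%N :> nat)%:R.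
Proof.
have i_in : i.+1 \in iota 1 10 by rewrite mem_iota /=; case: i => /= i; lia.
rewrite /etaf /X ecoef_scale ecoef_ebasis // eqSS eq_sym.
case: eqP => [i0 | _]; last by rewrite !mulr0.
have y1_neq0 : Num.sqrt y1 != 0 by rewrite sqrt_y1 mulf_neq0 // lt0r_neq0.
by rewrite /yof i0 eqxx mulr1 mulfV.
Qed.

Lemma yof_neq0 (i : 'I_7) : (i != 0 :> nat) -> yof y1 y2 y3 i = y2.
Proof. by move=> /negbTE i_neq0; rewrite /yof i_neq0; case: ifP; rewrite ?y3E. Qed.

Lemma ecoef_lie_X k i j : k \in [:: 1; 8; 9; 10]%N ->
  ecoef k (lie (X y1 y2 y3 i) (X y1 y2 y3 j)) = y2^-1 * (structZ k i.+1 j.+1)%:~R.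
Proof.
move=> k_in; rewrite /X lie_scale ecoef_scale ecoef_lie_ebasis.
have [i0 | i_neq0] := eqVneq (i : nat) 0%N.
  have /allP /(_ j.+1) := allP structZ_e1 k k_in.
  by rewrite i0 mem_iota /= ltnS ltn_ord => /(_ isT) /andP[/eqP -> _]; rewrite !mulr0.
have [j0 | j_neq0] := eqVneq (j : nat) 0%N.
  have /allP /(_ i.+1) := allP structZ_e1 k k_in.
  by rewrite j0 mem_iota /= ltnS ltn_ord => /(_ isT) /andP[_ /eqP ->]; rewrite !mulr0.
by rewrite !yof_neq0 // -invfM -expr2 sqr_sqrtr // ltW.
Qed.

Lemma omega_X i j :
  - (1 / 2) * etaf y1 (lie (X y1 y2 y3 i) (X y1 y2 y3 j)) = (- structZ 1 i.+1 j.+1)%:~R.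
Proof.
rewrite /etaf ecoef_lie_X // sqrt_y1 rmorphN /=.
by field; rewrite lt0r_neq0.
Qed.

Definition curv_comp (k : nat) : Defs.form R :=
  form2 (V := R^o) (fun i j => (structZ k i.+1 j.+1)%:~R).

Lemma curv_X i j : curv (X y1 y2 y3 i) (X y1 y2 y3 j) =
  \sum_(k <- [:: 8; 9; 10]%N) (structZ k i.+1 j.+1)%:~R *: (- y2^-1 *: ebasis R k).
Proof.
rewrite /curv !alpha_X /lie mulmx0 subrr sub0r /alpha !big_cons big_nil addr0 addrA.
by rewrite !ecoef_lie_X // !opprD !scalerA -!scaleNr !mulrN !(mulrC y2^-1).
Qed.

Lemma FalE : Fal y1 y2 y3 =
  form_scale (curv_comp 8) (- y2^-1 *: ebasis R 8)
  \+ form_scale (curv_comp 9) (- y2^-1 *: ebasis R 9)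
  \+ form_scale (curv_comp 10) (- y2^-1 *: ebasis R 10).
Proof.
apply: funext => K; rewrite /Fal /form_scale /curv_comp /form2 /=.
case: ifP => _; last by rewrite !scale0r !addr0.
rewrite !scaler_suml -!big_split; apply: eq_bigr => i _.
rewrite !scaler_suml -!big_split; apply: eq_bigr => j _.
by rewrite curv_X !big_cons big_nil addr0 addrA.
Qed.

Lemma models_eta : models etaZ (eta_form y1 y2 y3).
Proof.
move=> m lt_m; rewrite -(models_form1 R (fun i => (i == 0)%N%:Z) lt_m) /eta_form /form1.
by case: ifP => // _; apply: eq_bigr => i _; rewrite etaf_X.
Qed.

Lemma models_omega : models omegaZ (omega y1 y2 y3).
Proof.
move=> m lt_m; rewrite -(models_form2 R (fun i j => - structZ 1 i.+1 j.+1) lt_m).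
rewrite /omega /form2; case: ifP => // _.
by apply: eq_bigr => i _; apply: eq_bigr => j _; rewrite omega_X.
Qed.

Lemma self_dual_curv_comp k : k \in [:: 8; 9; 10]%N ->
  hodge 1 (wedge (V := R^o) (wedge (V := R^o) (curv_comp k) (eta_form y1 y2 y3))
    (omega y1 y2 y3)) = curv_comp k.
Proof.
move=> k_in; apply: models_eq (allP self_dual_curv_compZ k k_in); last first.
  exact: (models_form2 R (fun i j => structZ k i.+1 j.+1)).
exact: (models_hodge 1 (models_wedge (models_tabulate (models_wedge
  (models_form2 R (fun i j => structZ k i.+1 j.+1)) models_eta)) models_omega)).
Qed.

Lemma self_dual_Fal :
  hodge 1 (wedge (wedge (Fal y1 y2 y3) (eta_form y1 y2 y3)) (omega y1 y2 y3)) = Fal y1 y2 y3.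
Proof.
rewrite FalE !wedgeD !wedge_scale !hodgeD !hodge_scale.
by rewrite !self_dual_curv_comp.
Qed.

(* With eps = -1 the hypothesis, read on X^23, says -1 = 1. *)
Lemma orientation_positive eps : (eps = 1 \/ eps = -1) ->
  hodge (V := R^o) eps
    (wedge (V := R^o) (wedge (V := R^o) (eta_form y1 y2 y3) (omega y1 y2 y3)) (w0 R))
  = w0 R -> eps = 1.
Proof.
case=> [// | ->] /(congr1 (fun a => a (mask_set 6))).
have := models_hodge (-1) (models_wedge (models_wedge models_eta models_omega) (models_w0 R)).
by move=> /(_ 6%N isT); rewrite orientationZ rmorphN1 => ->; rewrite models_w0.
Qed.

End Geometry.

Theorem corollary4p7 (R : realType) (y1 y2 y3 eps : R) :
  0 < y2 -> y3 = y2 -> y1 = 4 * y2 ^+ 2 ->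
  (eps = 1 \/ eps = -1) ->
  (* orientation: ast(eta /\ omega /\ w) = w for w = X^23 + X^56 *)
  hodge (V := R^o) eps
    (wedge (V := R^o) (wedge (V := R^o) (eta_form y1 y2 y3) (omega y1 y2 y3)) (w0 R))
    = w0 R ->
  hodge eps (wedge (wedge (Fal y1 y2 y3) (eta_form y1 y2 y3)) (omega y1 y2 y3))
    = Fal y1 y2 y3.
Proof.
move=> y2_gt0 y3E y1E eps_pm orient.
rewrite (orientation_positive y2_gt0 y3E y1E eps_pm orient).
exact: self_dual_Fal.
Qed.
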